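(* Under the standing setting and assumptions (A1)–(A3) described in the context, assume $\mathcal A^\infty\cap\ker(\pi)=\{0\}$. Then $\mathcal R$ is upper semicontinuous at every point of $\mathcal X$.
   Context: Let $\mathcal X$ be a Hausdorff, first countable, locally convex topological vector space over $\mathbb R$, partially ordered by a partial order $\geq$ with positive cone $\mathcal X_+=\{X\in\mathcal X: X\geq 0\}$. Let $\mathcal M\subset\mathcal X$ be a vector subspace with $1<\dim\mathcal M<\infty$, carrying the relative topology, and let $\pi:\mathcal M\to\mathbb R$ be linear with $\ker(\pi)=\{Z\in\mathcal M:\pi(Z)=0\}$. Standing assumptions: (A1) there is $U\in\mathcal M\cap\mathcal X_+$ with $\pi(U)=1$; (A2) $\mathcal A\subsetneq\mathcal X$ is closed, contains $0$, and satisfies $\mathcal A+\mathcal X_+\subset\mathcal A$; (A3) the map $\rho(X)=\inf\{\pi(Z): Z\in\mathcal M,\ X+Z\in\mathcal A\}$ is finitely valued and continuous on $\mathcal X$. The optimal payoff map is $\mathcal R(X)=\{Z\in\mathcal M: X+Z\in\mathcal A,\ \pi(Z)=\rho(X)\}$. The asymptotic cone is $\mathcal A^\infty=\bigcap_{\varepsilon>0}\mathrm{cl}\{\lambda X:\lambda\in[0,\varepsilon],X\in\mathcal A\}$. $\mathcal R$ is upper semicontinuous at $X$ if for every open $\mathcal U\subset\mathcal M$ with $\mathcal R(X)\subset\mathcal U$ there is an open neighborhood $\mathcal U_X$ of $X$ with $\mathcal R(Y)\subset\mathcal U$ for all $Y\in\mathcal U_X$. *)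

From HB Require Import structures.
From mathcomp Require Import all_boot all_order all_algebra.
From mathcomp Require Import all_classical all_reals all_analysis.
Set Implicit Arguments. Unset Strict Implicit. Unset Printing Implicit Defensive.
Import Order.TTheory GRing.Theory Num.Theory.
Import numFieldTopology.Exports.
Local Open Scope classical_set_scope.
Local Open Scope ring_scope.

Definition first_countable (T : topologicalType) : Prop :=
  forall x : T, exists B : set_system T,
    [/\ countable B, (forall b, B b -> nbhs x b) &
        (forall U, nbhs x U -> exists2 b, B b & b `<=` U)].

Definition partial_order (T : Type) (le : T -> T -> Prop) : Prop :=
  [/\ forall x, le x x,
      (forall x y, le x y -> le y x -> x = y) &
      (forall x y z, le x y -> le y z -> le x z)].

Section defs.
Variables (R : realType) (X : tvsType R).

Definition subspace_of_dim (M : set X) (n : nat) : Prop :=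
  exists b : 'I_n -> X,
    (forall c : 'I_n -> R, \sum_(i < n) c i *: b i = 0 -> forall i, c i = 0) /\
    M = [set x | exists c : 'I_n -> R, x = \sum_(i < n) c i *: b i].

Definition linear_on (M : set X) (pi : X -> R) : Prop :=
  forall (a : R) (x y : X), M x -> M y -> pi (a *: x + y) = a * pi x + pi y.

Definition pos_cone (le : X -> X -> Prop) : set X := [set x | le 0 x].

Definition acc_values (A M : set X) (pi : X -> R) (x : X) : set R :=
  [set pi z | z in [set z | M z /\ A (x + z)]].

Definition rho (A M : set X) (pi : X -> R) (x : X) : R :=
  inf (acc_values A M pi x).

(* rho is finitely valued: the infimum is a real number, i.e. the set is
   nonempty and bounded below *)
Definition rho_finite (A M : set X) (pi : X -> R) : Prop :=
  forall x, acc_values A M pi x !=set0 /\ has_lbound (acc_values A M pi x).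

Definition optimal_payoff (A M : set X) (pi : X -> R) (x : X) : set X :=
  [set z | [/\ M z, A (x + z) & pi z = rho A M pi x]].

Definition ker_on (M : set X) (pi : X -> R) : set X :=
  [set z | M z /\ pi z = 0].

Definition asymptotic_cone (A : set X) : set X :=
  [set x | forall e : R, 0 < e ->
     closure [set y | exists l a, [/\ 0 <= l <= e, A a & y = l *: a]] x].

(* upper semicontinuity of a set-valued map F : X -> set X with values in M,
   where M carries the relative topology *)
Definition usc_at (M : set X) (F : X -> set X) (x : X) : Prop :=
  forall U : set X, (exists2 O : set X, open O & U = O `&` M) ->
    F x `<=` U ->
    exists2 V : set X, open V /\ V x & forall y, V y -> F y `<=` U.

End defs.

From HB Require Import structures.
From mathcomp Require Import all_boot all_order all_algebra.
From mathcomp Require Import all_classical all_reals all_analysis.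
From mathcomp Require Import ring lra.
Import Order.TTheory GRing.Theory Num.Theory.
Import numFieldTopology.Exports.
Local Open Scope classical_set_scope.
Local Open Scope ring_scope.

(* Suppose R is not upper semicontinuous at x: there are points y arbitrarily
   close to x with optimal payoffs Z_y outside an open set V containing R(x).
   Write Z_y in coordinates c_y on M and compress them into the unit ball by
   c |-> c / (1 + |c|); by compactness the compressed coordinates converge to
   some v0 along a filter finer than the neighbourhoods of x.  If |v0| < 1 the
   c_y converge, and closedness of A with continuity of rho makes the limit an
   optimal payoff of x, hence in the open set V, which the Z_y avoid.  If
   |v0| = 1 the rescaled payoffs Z_y / (1 + |c_y|) converge to a nonzero
   element of the asymptotic cone of A on which pi vanishes, contradicting
   A^oo `&` ker pi = {0}.  No other standing assumption is needed. *)

Section tvs_cvg.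
Context {R : numFieldType} {E : tvsType R} {T : Type} {F : set_system T}.
Context {FF : Filter F}.

Lemma tvs_cvgD {f g : T -> E} {a b : E} :
  f @ F --> a -> g @ F --> b -> (fun t => f t + g t) @ F --> a + b.
Proof.
move=> fa gb.
apply: (cvg_comp (fun t => (f t, g t)) (fun p : E * E => p.1 + p.2) (cvg_pair fa gb)).
exact: (@add_continuous _ (a, b)).
Qed.

Lemma tvs_cvgZ {s : T -> R} {f : T -> E} {k : R} {a : E} :
  s @ F --> k -> f @ F --> a -> (fun t => s t *: f t) @ F --> k *: a.
Proof.
move=> sk fa.
apply: (cvg_comp (fun t => ((s t : R^o), f t)) (fun p : R^o * E => p.1 *: p.2)
  (@cvg_pair _ _ _ _ (nbhs (k : R^o)) _ _ _ _ _ _ sk fa)).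
exact: (@scale_continuous _ _ ((k : R^o), a)).
Qed.

Lemma tvs_cvg_sum (I : Type) (r : seq I) (f : I -> T -> E) (a : I -> E) :
  (forall i, f i @ F --> a i) ->
  (fun t => \sum_(i <- r) f i t) @ F --> \sum_(i <- r) a i.
Proof.
move=> fa; elim: r => [|i r IH].
  under eq_fun do rewrite big_nil.
  by rewrite big_nil; exact: cvg_cst.
under eq_fun do rewrite big_cons.
by rewrite big_cons; exact: tvs_cvgD.
Qed.

End tvs_cvg.

Section lincomb.
Context {R : numFieldType} {E : tvsType R} {n : nat} (b : 'I_n -> E).

Definition lincomb (c : 'rV[R]_n) : E := \sum_(i < n) c ord0 i *: b i.

Lemma lincomb_continuous : continuous lincomb.
Proof.
move=> c; apply: (@tvs_cvg_sum _ _ _ (nbhs c) _ _ _ (fun i t => t ord0 i *: b i)) => i.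
by apply: tvs_cvgZ; [exact: coord_continuous | exact: cvg_cst].
Qed.

Lemma lincombZ (a : R) (c : 'rV[R]_n) : lincomb (a *: c) = a *: lincomb c.
Proof.
by rewrite /lincomb scaler_sumr; apply: eq_bigr => i _; rewrite mxE scalerA.
Qed.

Lemma lincombP (a : R) (c d : 'rV[R]_n) :
  lincomb (a *: c + d) = a *: lincomb c + lincomb d.
Proof.
rewrite /lincomb scaler_sumr -big_split; apply: eq_bigr => i _.
by rewrite !mxE scalerDl scalerA.
Qed.

Lemma lincomb_delta (i : 'I_n) : lincomb (delta_mx ord0 i) = b i.
Proof.
rewrite /lincomb (bigD1 i) //= mxE !eqxx scale1r big1 ?addr0 // => j ji.
by rewrite mxE eqxx (negbTE ji) scale0r.
Qed.

End lincomb.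

Lemma subspace_of_dim_lincomb {R : realType} {X : tvsType R} {M : set X} {n : nat} :
  subspace_of_dim M n ->
  exists b : 'I_n -> X,
    (forall c, lincomb b c = 0 -> c = 0) /\ M = range (lincomb b).
Proof.
move=> [b [b_free ->]]; exists b; split.
  move=> c /(b_free (fun i => c ord0 i)) c0.
  by apply/matrixP => i j; rewrite (ord1 i) mxE; exact: c0.
apply/seteqP; split => [_ [c' ->] | _ [c _ <-]]; last by exists (c ord0).
by exists (\row_i c' i) => //; apply: eq_bigr => i _; rewrite mxE.
Qed.

Lemma linear_on_sum {R : realType} {X : tvsType R} {M : set X} (pi : X -> R) :
  linear_on M pi -> M 0 -> (forall a u v, M u -> M v -> M (a *: u + v)) ->
  forall (I : Type) (r : seq I) (a : I -> R) (u : I -> X), (forall i, M (u i)) ->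
  M (\sum_(i <- r) a i *: u i) /\
  pi (\sum_(i <- r) a i *: u i) = \sum_(i <- r) a i * pi (u i).
Proof.
move=> pi_lin M0 M_lin I r a u Mu; elim: r => [|i r [IHM IHpi]].
  rewrite !big_nil; split => //.
  by have := pi_lin 1 _ _ M0 M0; rewrite scale1r addr0 mul1r; lra.
by rewrite !big_cons; split; [exact: M_lin | rewrite pi_lin // IHpi].
Qed.

Lemma lim_eq_near {R : realType} {T : Type} {F : set_system T}
    {FF : ProperFilter F} {f g : T -> R} {a b : R} :
  f @ F --> a -> g @ F --> b -> (\forall t \near F, f t = g t) -> a = b.
Proof.
move=> fa gb fg; have fb : f @ F --> b.
  by apply: cvg_trans gb; apply: near_eq_cvg; apply: filterS fg.
exact: (cvg_unique _ fa fb).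
Qed.

Lemma cluster_fmap_cvg {T : Type} {U : topologicalType} {F : set_system T}
    {FF : Filter F} {f : T -> U} {p : U} :
  cluster (f @ F) p ->
  exists G : set_system T, [/\ ProperFilter G, F `<=` G & f @ G --> p].
Proof.
move=> clp.
pose G := [set S | exists2 A, F A & exists2 B, nbhs p B & A `&` f @^-1` B `<=` S].
have GT : G setT.
  by exists setT; [exact: filterT | exists setT; first exact: filterT].
exists G; split; last 2 first.
- by move=> A FA; exists A => //; exists setT; [exact: filterT | move=> t []].
- by move=> B pB; exists setT; [exact: filterT | exists B => // t []].
apply: Build_ProperFilter_ex.
  move=> S [A FA [B pB AB]].
  have FfA : F (f @^-1` (f @` A)) by apply: filterS FA => t At; exists t.
  by have [_ [[t At <-] Bft]] := clp _ _ FfA pB; exists t; exact: AB.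
split => //.
  move=> S1 S2 [A1 FA1 [B1 pB1 sub1]] [A2 FA2 [B2 pB2 sub2]].
  exists (A1 `&` A2); first exact: filterI.
  exists (B1 `&` B2); first exact: filterI.
  by move=> t [[A1t A2t] [B1t B2t]]; split; [exact: sub1 | exact: sub2].
move=> S1 S2 S12 [A FA [B pB sub]].
by exists A => //; exists B => // t /sub /S12.
Qed.

Lemma closed_unit_ball_compact (R : realType) (n : nat) :
  compact [set v : 'rV[R]_n | `|v| <= 1].
Proof.
apply: bounded_closed_compact.
  by exists 1; split => // r r1 v v1; exact: le_trans v1 (ltW r1).
apply: (@preimage_closed _ _ (fun v : 'rV[R]_n => `|v|) [set r : R | r <= 1]).
  by move=> v _; exact: norm_continuous.
exact: closed_le.
Qed.

Section shrink.
Context {R : realFieldType} {V : normedModType R}.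

Definition shrink (v : V) : V := (1 + `|v|)^-1 *: v.

Lemma shrink_normE (v : V) : 1 - `|shrink v| = (1 + `|v|)^-1.
Proof.
have nv_gt0 : 0 < 1 + `|v| by rewrite ltr_pwDl.
rewrite normrZ gtr0_norm ?invr_gt0 //.
by field; rewrite lt0r_neq0.
Qed.

Lemma shrink_norm_lt1 (v : V) : `|shrink v| < 1.
Proof.
have : 0 < (1 + `|v|)^-1 by rewrite invr_gt0 ltr_pwDl.
by have := shrink_normE v; lra.
Qed.

Lemma shrinkK (v : V) : (1 - `|shrink v|)^-1 *: shrink v = v.
Proof.
by rewrite shrink_normE invrK scalerA mulfV ?scale1r // lt0r_neq0 // ltr_pwDl.
Qed.

End shrink.

Section optimal_payoff_usc.
Context {R : realType} {X : tvsType R} {n : nat} (b : 'I_n -> X).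
Context (pi : X -> R) (A : set X).

Local Notation lc := (lincomb b).
Local Notation M := (range lc).
Local Notation rho := (rho A M pi).
Local Notation payoff := (optimal_payoff A M pi).

Hypothesis b_free : forall c, lc c = 0 -> c = 0.
Hypothesis pi_lin : linear_on M pi.
Hypothesis A_closed : closed A.
Hypothesis rho_cont : continuous rho.
Hypothesis cone_ker : asymptotic_cone A `&` ker_on M pi = [set 0].

Lemma pi_lincomb (c : 'rV[R]_n) : pi (lc c) = lincomb (fun i => pi (b i) : R^o) c.
Proof.
have M0 : M 0 by exists (0 *: 0) => //; rewrite lincombZ scale0r.
have M_lin a u v : M u -> M v -> M (a *: u + v).
  by move=> [cu _ <-] [cv _ <-]; exists (a *: cu + cv) => //; rewrite lincombP.
have Mb i : M (b i) by exists (delta_mx ord0 i) => //; rewrite lincomb_delta.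
by have [_ ->] := linear_on_sum pi pi_lin M0 M_lin _ (index_enum 'I_n) (c ord0) _ Mb.
Qed.

Lemma pi_lincomb_continuous : continuous (pi \o lc).
Proof.
move=> c; rewrite (_ : pi \o lc = lincomb (fun i => pi (b i) : R^o)).
  exact: lincomb_continuous.
by apply: funext => d; rewrite /= pi_lincomb.
Qed.

Lemma pi_lincombZ (a : R) (c : 'rV[R]_n) : pi (lc (a *: c)) = a * pi (lc c).
Proof. by rewrite !pi_lincomb lincombZ. Qed.

Lemma optimal_payoff_cvg {T : Type} {F : set_system T} {FF : ProperFilter F}
    {y : T -> X} {c : T -> 'rV[R]_n} {x : X} {c0 : 'rV[R]_n} :
  y @ F --> x -> c @ F --> c0 ->
  (\forall t \near F, payoff (y t) (lc (c t))) -> payoff x (lc c0).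
Proof.
move=> yx cc0 opt; split; first by exists c0.
  apply: (closed_cvg _ A_closed _ _ (tvs_cvgD yx (cvg_comp _ _ cc0 (lincomb_continuous b c0)))).
  by apply: filterS opt => t [].
apply: (lim_eq_near (cvg_comp _ _ cc0 (pi_lincomb_continuous c0)) (cvg_comp _ _ yx (rho_cont x))).
by apply: filterS opt => t [].
Qed.

Lemma rescaled_payoff_lim_eq0 {T : Type} {F : set_system T} {FF : ProperFilter F}
    {y : T -> X} {s : T -> R} {c : T -> 'rV[R]_n} {x : X} {v : 'rV[R]_n} :
  y @ F --> x -> s @ F --> 0 -> (\forall t \near F, 0 <= s t) ->
  (fun t => s t *: c t) @ F --> v ->
  (\forall t \near F, payoff (y t) (lc (c t))) -> v = 0.
Proof.
move=> yx s0 s_ge0 scv opt; apply: b_free.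
suff : (asymptotic_cone A `&` ker_on M pi) (lc v) by rewrite cone_ker.
split; last first.
  split; first by exists v.
  apply: (lim_eq_near (cvg_comp _ _ scv (pi_lincomb_continuous v))
    (g := fun t => s t * rho (y t))); last first.
    by apply: filterS opt => t [_ _ <-] /=; rewrite pi_lincombZ.
  by rewrite -(mul0r (rho x)); apply: cvgM s0 (cvg_comp _ _ yx (rho_cont x)).
move=> e e0.
have lim : (fun t => s t *: (y t + lc (c t))) @ F --> lc v.
  under eq_fun do rewrite scalerDr -lincombZ.
  rewrite -[lc v]add0r -(scale0r x).
  exact: tvs_cvgD (tvs_cvgZ s0 yx) (cvg_comp _ _ scv (lincomb_continuous b v)).
apply: (closed_cvg _ (@closed_closure _ _) _ _ lim).
have se : \forall t \near F, s t <= e by apply: cvgr_le s0 e e0.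
apply: filterS (filterI opt (filterI s_ge0 se)) => t [[_ At _] [st0 ste]].
by apply: subset_closure; exists (s t), (y t + lc (c t)); split => //; apply/andP.
Qed.

Lemma payoffs_outside_open_not_cvg (T : Type) (F : set_system T)
    {FF : ProperFilter F} (y : T -> X) (c : T -> 'rV[R]_n) (x : X) (V : set X)
    (v0 : 'rV[R]_n) :
  open V -> payoff x `<=` V -> y @ F --> x -> (shrink \o c) @ F --> v0 ->
  ~ (\forall t \near F, payoff (y t) (lc (c t)) /\ ~ V (lc (c t))).
Proof.
move=> oV RxV yx cv0 bad.
have opt : \forall t \near F, payoff (y t) (lc (c t)) by apply: filterS bad => t [].
pose s t := 1 - `|shrink (c t)|.
have s_gt0 t : 0 < s t by rewrite /s shrink_normE invr_gt0 ltr_pwDl.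
have s_ge0 : \forall t \near F, 0 <= s t by apply: nearW => t; exact: ltW.
have s_lim : s @ F --> 1 - `|v0| by apply: cvgB (cvg_cst _) (cvg_norm cv0).
have [v0_lt1 | v0_ge1] := ltrP `|v0| 1.
  pose c0 := (1 - `|v0|)^-1 *: v0.
  have cc0 : c @ F --> c0.
    have -> : c = fun t => (s t)^-1 *: shrink (c t).
      by apply: funext => t; rewrite shrinkK.
    by apply: cvgZ cv0; apply: cvgV s_lim; rewrite subr_eq0 eq_sym lt_eqF.
  have Vc0 : V (lc c0) by apply: RxV; exact: optimal_payoff_cvg yx cc0 opt.
  have Vc : \forall t \near F, V (lc (c t)).
    by apply: (cvg_comp _ _ cc0 (lincomb_continuous b c0)); apply: open_nbhs_nbhs.
  by have [t [[_ nVt] Vt]] := filter_ex (filterI bad Vc).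
have v0_le1 : `|v0| <= 1.
  have : 0 <= 1 - `|v0|.
    exact: (closed_cvg [set r : R | 0 <= r] (@closed_ge _ 0) s_ge0 _ s_lim).
  by rewrite subr_ge0.
have s0 : s @ F --> 0.
  by rewrite (_ : `|v0| = 1) ?subrr // in s_lim; apply/eqP; rewrite eq_le v0_le1.
have scv : (fun t => s t *: c t) @ F --> v0.
  by apply: cvg_trans cv0; apply: near_eq_cvg; apply: nearW => t; rewrite /s shrink_normE.
have v00 : v0 = 0 by exact: rescaled_payoff_lim_eq0 yx s0 s_ge0 scv opt.
by move: v0_ge1; rewrite v00 normr0 ler10.
Qed.

Theorem optimal_payoff_usc (x : X) : usc_at M payoff x.
Proof.
move=> _ [V oV ->] RxV; apply: contrapT => not_usc.
pose D := [set y | exists c, payoff y (lc c) /\ ~ V (lc c)].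
have clD : closure D x.
  move=> B; rewrite nbhsE => -[W [oW Wx] WB]; apply: contrapT => noD.
  apply: not_usc; exists W => // y Wy z Ryz; split; last by case: Ryz.
  apply: contrapT => nVz; apply: noD; exists y; split; last exact: WB.
  by case: (Ryz) => -[c _ zc] _ _; exists c; rewrite zc.
have /choice[c Dc] : forall y, exists c, D y -> payoff y (lc c) /\ ~ V (lc c).
  move=> y; have [[c' Dyc] | nDy] := pselect (D y).
    by exists c'.
  by exists 0 => /nDy.
pose F := within D (nbhs x).
have FF : ProperFilter F by apply: within_nbhs_proper.
have F_ball : ((shrink \o c) @ F) [set v | `|v| <= 1].
  by apply: nearW => y _; exact: ltW (shrink_norm_lt1 (c y)).
have [v0 [_ clv0]] := closed_unit_ball_compact R n _ _ F_ball.
have [G [GF FG Gv0]] := cluster_fmap_cvg clv0.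
apply: (@payoffs_outside_open_not_cvg _ G _ id c x V v0 oV _ _ Gv0).
- by move=> z /RxV [].
- exact: cvg_trans FG (cvg_within D).
- by apply: FG; apply: filterS Dc (withinT _ _).
Qed.

End optimal_payoff_usc.

Theorem mainTheorem16 (R : realType) (X : tvsType R)
  (hausX : hausdorff_space X) (fcX : first_countable X)
  (le : X -> X -> Prop) (hle : partial_order le)
  (M : set X) (n : nat) (hn : (1 < n)%N) (hM : subspace_of_dim M n)
  (pi : X -> R) (hpi : linear_on M pi)
  (A : set X)
  (A1 : exists2 U : X, M U /\ pos_cone le U & pi U = 1)
  (A2 : [/\ closed A, A 0, A != setT &
          forall x p, A x -> pos_cone le p -> A (x + p)])
  (A3 : rho_finite A M pi /\ continuous (rho A M pi))
  (hcone : asymptotic_cone A `&` ker_on M pi = [set 0]) :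
  forall x : X, usc_at M (optimal_payoff A M pi) x.
Proof.
have [b [b_free M_lc]] := subspace_of_dim_lincomb hM; subst M.
have [A_closed _ _ _] := A2.
exact: optimal_payoff_usc b_free hpi A_closed A3.2 hcone.
Qed.
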